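(* Let $\lambda>1$, $\mu>1$. Then the system $$ \begin{cases} 2\,(a+\alpha)(3-a\alpha-a-\alpha)(3-a\alpha+a+\alpha)+(\lambda-\mu)(a-\alpha)^3=0,\\ (\lambda+\mu)^2(a-\alpha)^6=4\,(3+a\alpha)^3(1-a\alpha)(2+a+\alpha)(2-a-\alpha) \end{cases} $$ has at most one solution $(\alpha,a)$ with $-1<\alpha<a<1$. *)

From Stdlib Require Import Reals.
Open Scope R_scope.

Definition sys (lambda mu alpha a : R) : Prop :=
  2 * (a + alpha) * (3 - a * alpha - a - alpha) * (3 - a * alpha + a + alpha)
    + (lambda - mu) * (a - alpha) ^ 3 = 0 /\
  (lambda + mu) ^ 2 * (a - alpha) ^ 6
    = 4 * (3 + a * alpha) ^ 3 * (1 - a * alpha) * (2 + a + alpha) * (2 - a - alpha).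

From Stdlib Require Import Reals Lra.
From Coquelicot Require Import Coquelicot.
Open Scope R_scope.

(* Writing d = a - alpha, the two equations say N(alpha, a) = (mu - lambda) d^3 / 2 and
   M(alpha, a) = ((lambda + mu) d^3 / 2)^2 for the polynomials M, N below. Hence every
   solution lies on the level set G = ((lambda + mu) / 2)^2, rho = (mu - lambda) / (mu + lambda)
   of the symmetric functions G = M / d^6 and rho = N / sqrt M. On (-1, 1), G(x, .) increases
   below x and decreases above x, while rho(x, .) increases; both sign conditions on the
   derivatives are certified by Bernstein expansions with positive coefficients. Comparing two
   solutions along a horizontal and a vertical segment then shows that (G, rho) is injective on
   the triangle -1 < alpha < a < 1. *)

Definition Mpol (x t : R) : R := (3 + t * x) ^ 3 * (1 - t * x) * (4 - (t + x) ^ 2).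
Definition Npol (x t : R) : R := (t + x) * ((3 - t * x) ^ 2 - (t + x) ^ 2).

Definition dMpol (x t : R) : R :=
  3 * x * (3 + t * x) ^ 2 * (1 - t * x) * (4 - (t + x) ^ 2)
  - x * (3 + t * x) ^ 3 * (4 - (t + x) ^ 2) - 2 * (t + x) * (3 + t * x) ^ 3 * (1 - t * x).
Definition dNpol (x t : R) : R :=
  ((3 - t * x) ^ 2 - (t + x) ^ 2) + (t + x) * (2 * (3 - t * x) * (- x) - 2 * (t + x)).

Definition G (x t : R) : R := Mpol x t / (t - x) ^ 6.
Definition rho (x t : R) : R := Npol x t / sqrt (Mpol x t).

Lemma Mpol_sym x t : Mpol x t = Mpol t x.
Proof. unfold Mpol; ring. Qed.

Lemma Npol_sym x t : Npol x t = Npol t x.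
Proof. unfold Npol; ring. Qed.

Lemma G_sym x t : G x t = G t x.
Proof. unfold G; rewrite Mpol_sym; f_equal; ring. Qed.

Lemma rho_sym x t : rho x t = rho t x.
Proof. unfold rho; rewrite Mpol_sym, Npol_sym; reflexivity. Qed.

Lemma Mpol_pos x t : -1 < x < 1 -> -1 < t < 1 -> 0 < Mpol x t.
Proof.
  intros Hx Ht.
  assert (Htx : -1 < t * x < 1) by (split; nra).
  unfold Mpol; apply Rmult_lt_0_compat; [apply Rmult_lt_0_compat|].
  - apply pow_lt; lra.
  - lra.
  - nra.
Qed.

Lemma sys_G_rho lambda mu alpha a :
  0 < lambda + mu -> alpha < a -> sys lambda mu alpha a ->
  G alpha a = ((lambda + mu) / 2) ^ 2 /\ rho alpha a = (mu - lambda) / (mu + lambda).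
Proof.
  intros Hlm Hlt [EN EM].
  assert (Hd : 0 < (a - alpha) ^ 3) by (apply pow_lt; lra).
  assert (HM : Mpol alpha a = ((lambda + mu) * (a - alpha) ^ 3 / 2) ^ 2).
  { transitivity ((lambda + mu) ^ 2 * (a - alpha) ^ 6 / 4); [|field].
    rewrite EM; unfold Mpol; field. }
  assert (HN : Npol alpha a = (mu - lambda) * (a - alpha) ^ 3 / 2) by (unfold Npol; lra).
  unfold G, rho; rewrite HM, HN, sqrt_pow2 by (apply Rmult_le_pos; nra).
  split; field; lra.
Qed.

(* Invariance under (x, t) -> (-x, -t) pairs the Bernstein monomials. *)
Definition bern_pair (A C : R) (i j k l : nat) : R :=
  A ^ i * (1 - A) ^ j * C ^ k * (1 - C) ^ l + A ^ j * (1 - A) ^ i * C ^ l * (1 - C) ^ k.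

Lemma bern_pair_pos A C i j k l : 0 < A < 1 -> 0 < C < 1 -> 0 < bern_pair A C i j k l.
Proof.
  intros HA HC.
  assert (Hmon : forall p q r s, 0 < A ^ p * (1 - A) ^ q * C ^ r * (1 - C) ^ s).
  { intros; repeat apply Rmult_lt_0_compat; apply pow_lt; lra. }
  unfold bern_pair; apply Rplus_lt_0_compat; apply Hmon.
Qed.

Ltac bern_sum_pos :=
  match goal with
  | |- 0 < _ + _ => apply Rplus_lt_0_compat; bern_sum_pos
  | |- 0 < _ * bern_pair _ _ _ _ _ _ =>
      apply Rmult_lt_0_compat; [lra | apply bern_pair_pos; assumption]
  | |- 0 < _ * _ => apply Rmult_lt_0_compat; [lra | bern_sum_pos]
  end.

Lemma pos_on_square_of_unit_square (P : R -> R -> R) :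
  (forall A C, 0 < A < 1 -> 0 < C < 1 -> 0 < P (2 * A - 1) (2 * C - 1)) ->
  forall x t, -1 < x < 1 -> -1 < t < 1 -> 0 < P x t.
Proof.
  intros HP x t Hx Ht.
  replace x with (2 * ((1 + x) / 2) - 1) by field.
  replace t with (2 * ((1 + t) / 2) - 1) by field.
  apply HP; lra.
Qed.

Lemma G_slope_bernstein A C :
  let x := 2 * A - 1 in let t := 2 * C - 1 in
  6 * Mpol x t - dMpol x t * (t - x) = 512 * (
    8 * bern_pair A C 0 7 2 3 + 12 * bern_pair A C 0 7 3 2 + 6 * bern_pair A C 0 7 4 1
  + 1 * bern_pair A C 0 7 5 0 + 24 * bern_pair A C 1 6 1 4 + 76 * bern_pair A C 1 6 2 3
  + 90 * bern_pair A C 1 6 3 2 + 45 * bern_pair A C 1 6 4 1 + 8 * bern_pair A C 1 6 5 0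
  + 16 * bern_pair A C 2 5 0 5 + 112 * bern_pair A C 2 5 1 4 + 262 * bern_pair A C 2 5 2 3
  + 281 * bern_pair A C 2 5 3 2 + 140 * bern_pair A C 2 5 4 1 + 26 * bern_pair A C 2 5 5 0
  + 40 * bern_pair A C 3 4 0 5 + 222 * bern_pair A C 3 4 1 4 + 469 * bern_pair A C 3 4 2 3
  + 476 * bern_pair A C 3 4 3 2 + 234 * bern_pair A C 3 4 4 1 + 44 * bern_pair A C 3 4 5 0).
Proof. unfold Mpol, dMpol, bern_pair; cbv zeta; ring. Qed.

Lemma rho_slope_bernstein A C :
  let x := 2 * A - 1 in let t := 2 * C - 1 in
  2 * dNpol x t * Mpol x t - Npol x t * dMpol x t = 2048 * (
    8 * bern_pair A C 0 9 4 3 + 12 * bern_pair A C 0 9 5 2 + 6 * bern_pair A C 0 9 6 1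
  + 1 * bern_pair A C 0 9 7 0 + 72 * bern_pair A C 1 8 3 4 + 180 * bern_pair A C 1 8 4 3
  + 174 * bern_pair A C 1 8 5 2 + 75 * bern_pair A C 1 8 6 1 + 12 * bern_pair A C 1 8 7 0
  + 168 * bern_pair A C 2 7 2 5 + 708 * bern_pair A C 2 7 3 4 + 1128 * bern_pair A C 2 7 4 3
  + 888 * bern_pair A C 2 7 5 2 + 348 * bern_pair A C 2 7 6 1 + 54 * bern_pair A C 2 7 7 0
  + 136 * bern_pair A C 3 6 1 6 + 996 * bern_pair A C 3 6 2 5 + 2560 * bern_pair A C 3 6 3 4
  + 3264 * bern_pair A C 3 6 4 3 + 2232 * bern_pair A C 3 6 5 2 + 794 * bern_pair A C 3 6 6 1
  + 116 * bern_pair A C 3 6 7 0 + 48 * bern_pair A C 4 5 0 7 + 576 * bern_pair A C 4 5 1 6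
  + 2406 * bern_pair A C 4 5 2 5 + 4797 * bern_pair A C 4 5 3 4 + 5184 * bern_pair A C 4 5 4 3
  + 3087 * bern_pair A C 4 5 5 2 + 954 * bern_pair A C 4 5 6 1 + 120 * bern_pair A C 4 5 7 0).
Proof. unfold Mpol, dMpol, Npol, dNpol, bern_pair; cbv zeta; ring. Qed.

Lemma G_slope_pos x t : -1 < x < 1 -> -1 < t < 1 -> 0 < 6 * Mpol x t - dMpol x t * (t - x).
Proof.
  apply (pos_on_square_of_unit_square (fun x t => 6 * Mpol x t - dMpol x t * (t - x))).
  intros A C HA HC; cbv beta; rewrite G_slope_bernstein; bern_sum_pos.
Qed.

Lemma rho_slope_pos x t : -1 < x < 1 -> -1 < t < 1 ->
  0 < 2 * dNpol x t * Mpol x t - Npol x t * dMpol x t.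
Proof.
  apply (pos_on_square_of_unit_square
           (fun x t => 2 * dNpol x t * Mpol x t - Npol x t * dMpol x t)).
  intros A C HA HC; cbv beta; rewrite rho_slope_bernstein; bern_sum_pos.
Qed.

Lemma is_derive_Mpol x t : is_derive (Mpol x) t (dMpol x t).
Proof. unfold Mpol, dMpol; auto_derive; [easy | ring]. Qed.

Lemma is_derive_Npol x t : is_derive (Npol x) t (dNpol x t).
Proof. unfold Npol, dNpol; auto_derive; [easy | ring]. Qed.

Definition dG (x t : R) : R := - (6 * Mpol x t - dMpol x t * (t - x)) / (t - x) ^ 7.
Definition drho (x t : R) : R :=
  (2 * dNpol x t * Mpol x t - Npol x t * dMpol x t) / (2 * Mpol x t * sqrt (Mpol x t)).

Lemma is_derive_G x t : t <> x -> is_derive (G x) t (dG x t).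
Proof.
  intros Htx; assert (Hd : t - x <> 0) by lra.
  unfold G, dG, Mpol, dMpol; auto_derive.
  - repeat apply Rmult_integral_contrapositive_currified; intro; apply Htx; lra.
  - field; exact Hd.
Qed.

Lemma is_derive_rho x t : 0 < Mpol x t -> is_derive (rho x) t (drho x t).
Proof.
  intros HM; unfold drho.
  assert (Hs : 0 < sqrt (Mpol x t)) by (apply sqrt_lt_R0; exact HM).
  assert (Hss : sqrt (Mpol x t) * sqrt (Mpol x t) = Mpol x t) by (apply sqrt_sqrt; lra).
  assert (Hquot := is_derive_div (Npol x) (fun s => sqrt (Mpol x s)) t _ _
                     (is_derive_Npol x t) (is_derive_sqrt (Mpol x) t _ (is_derive_Mpol x t) HM)
                     ltac:(lra)).
  replace ((2 * dNpol x t * Mpol x t - Npol x t * dMpol x t)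
           / (2 * Mpol x t * sqrt (Mpol x t)))
    with ((dNpol x t * sqrt (Mpol x t) - Npol x t * (dMpol x t / (2 * sqrt (Mpol x t))))
          / sqrt (Mpol x t) ^ 2).
  - exact Hquot.
  - set (S := sqrt (Mpol x t)) in *; rewrite <- Hss; field; lra.
Qed.

Lemma incr_on_open_interval (f df : R -> R) (lo hi : R) :
  (forall t, lo < t < hi -> is_derive f t (df t)) ->
  (forall t, lo < t < hi -> 0 < df t) ->
  forall x y, lo < x -> x < y -> y < hi -> f x < f y.
Proof.
  intros Hder Hpos x y Hx Hxy Hy.
  apply (incr_function f lo hi df); simpl; auto.
  intros s Hs1 Hs2; apply Hpos; lra.
Qed.

Lemma decr_on_open_interval (f df : R -> R) (lo hi : R) :
  (forall t, lo < t < hi -> is_derive f t (df t)) ->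
  (forall t, lo < t < hi -> df t < 0) ->
  forall x y, lo < x -> x < y -> y < hi -> f y < f x.
Proof.
  intros Hder Hneg x y Hx Hxy Hy.
  enough (- f x < - f y) by lra.
  apply (incr_on_open_interval (fun s => - f s) (fun s => - df s) lo hi); auto.
  - intros s Hs; exact (is_derive_opp f s (df s) (Hder s Hs)).
  - intros s Hs; specialize (Hneg s Hs); lra.
Qed.

Lemma G_increasing_below x t1 t2 : -1 < t1 -> t1 < t2 -> t2 < x -> x < 1 -> G x t1 < G x t2.
Proof.
  intros Ht1 Ht12 Ht2 Hx.
  apply (incr_on_open_interval (G x) (dG x) (-1) x); auto; intros t Ht.
  - apply is_derive_G; lra.
  - assert (Hp := G_slope_pos x t ltac:(lra) ltac:(lra)).
    unfold dG; replace (- (6 * Mpol x t - dMpol x t * (t - x)) / (t - x) ^ 7)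
      with ((6 * Mpol x t - dMpol x t * (t - x)) / (x - t) ^ 7) by (field; lra).
    apply Rdiv_lt_0_compat; [exact Hp | apply pow_lt; lra].
Qed.

Lemma G_decreasing_above x t1 t2 : -1 < x -> x < t1 -> t1 < t2 -> t2 < 1 -> G x t2 < G x t1.
Proof.
  intros Hx Ht1 Ht12 Ht2.
  apply (decr_on_open_interval (G x) (dG x) x 1); auto; intros t Ht.
  - apply is_derive_G; lra.
  - assert (Hp := G_slope_pos x t ltac:(lra) ltac:(lra)).
    assert (Hd : 0 < (t - x) ^ 7) by (apply pow_lt; lra).
    unfold dG, Rdiv; rewrite Ropp_mult_distr_l_reverse.
    apply Ropp_lt_gt_0_contravar, Rdiv_lt_0_compat; assumption.
Qed.

Lemma rho_increasing x t1 t2 : -1 < x < 1 -> -1 < t1 -> t1 < t2 -> t2 < 1 ->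
  rho x t1 < rho x t2.
Proof.
  intros Hx Ht1 Ht12 Ht2.
  apply (incr_on_open_interval (rho x) (drho x) (-1) 1); auto; intros t Ht.
  - apply is_derive_rho, Mpol_pos; lra.
  - assert (HM := Mpol_pos x t Hx Ht).
    unfold drho; apply Rdiv_lt_0_compat; [apply rho_slope_pos; lra|].
    apply Rmult_lt_0_compat; [lra | apply sqrt_lt_R0; exact HM].
Qed.

Lemma G_rho_separate_lt alpha1 a1 alpha2 a2 :
  -1 < alpha1 -> alpha1 < a1 -> a1 < 1 -> -1 < alpha2 -> alpha2 < a2 -> a2 < 1 ->
  alpha1 < alpha2 -> G alpha1 a1 = G alpha2 a2 -> rho alpha1 a1 <> rho alpha2 a2.
Proof.
  intros Hlo1 Hlt1 Hhi1 Hlo2 Hlt2 Hhi2 Halpha HG Hrho.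
  destruct (total_order_T a1 a2) as [[Ha | <-] | Ha].
  - assert (Hr1 := rho_increasing alpha1 a1 a2 ltac:(lra) ltac:(lra) Ha Hhi2).
    assert (Hr2 := rho_increasing a2 alpha1 alpha2 ltac:(lra) Hlo1 Halpha ltac:(lra)).
    rewrite (rho_sym a2 alpha1), (rho_sym a2 alpha2) in Hr2; lra.
  - assert (HG1 := G_increasing_below a1 alpha1 alpha2 Hlo1 Halpha Hlt2 Hhi1).
    rewrite (G_sym a1 alpha1), (G_sym a1 alpha2) in HG1; lra.
  - assert (HG1 := G_increasing_below a1 alpha1 alpha2 Hlo1 Halpha ltac:(lra) Hhi1).
    assert (HG2 := G_decreasing_above alpha2 a2 a1 Hlo2 Hlt2 Ha Hhi1).
    rewrite (G_sym a1 alpha1), (G_sym a1 alpha2) in HG1; lra.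
Qed.

Lemma G_rho_injective alpha1 a1 alpha2 a2 :
  -1 < alpha1 -> alpha1 < a1 -> a1 < 1 -> -1 < alpha2 -> alpha2 < a2 -> a2 < 1 ->
  G alpha1 a1 = G alpha2 a2 -> rho alpha1 a1 = rho alpha2 a2 ->
  alpha1 = alpha2 /\ a1 = a2.
Proof.
  intros Hlo1 Hlt1 Hhi1 Hlo2 Hlt2 Hhi2 HG Hrho.
  destruct (total_order_T alpha1 alpha2) as [[Halpha | <-] | Halpha].
  - exfalso; exact (G_rho_separate_lt alpha1 a1 alpha2 a2
      Hlo1 Hlt1 Hhi1 Hlo2 Hlt2 Hhi2 Halpha HG Hrho).
  - split; [reflexivity|].
    destruct (total_order_T a1 a2) as [[Ha | Ha] | Ha]; [exfalso | exact Ha | exfalso].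
    + assert (HG' := G_decreasing_above alpha1 a1 a2 Hlo1 Hlt1 Ha Hhi2); lra.
    + assert (HG' := G_decreasing_above alpha1 a2 a1 Hlo1 Hlt2 Ha Hhi1); lra.
  - exfalso; apply (G_rho_separate_lt alpha2 a2 alpha1 a1); auto.
Qed.

Theorem corollary4p4 (lambda mu : R) (hl : 1 < lambda) (hm : 1 < mu)
  (alpha1 a1 alpha2 a2 : R) :
  -1 < alpha1 -> alpha1 < a1 -> a1 < 1 -> sys lambda mu alpha1 a1 ->
  -1 < alpha2 -> alpha2 < a2 -> a2 < 1 -> sys lambda mu alpha2 a2 ->
  alpha1 = alpha2 /\ a1 = a2.
Proof.
  intros Hlo1 Hlt1 Hhi1 Hsys1 Hlo2 Hlt2 Hhi2 Hsys2.
  assert (Hlm : 0 < lambda + mu) by lra.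
  destruct (sys_G_rho lambda mu alpha1 a1 Hlm Hlt1 Hsys1) as [HG1 Hrho1].
  destruct (sys_G_rho lambda mu alpha2 a2 Hlm Hlt2 Hsys2) as [HG2 Hrho2].
  apply G_rho_injective; congruence.
Qed.
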